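(* For $t\in(0,1)$ and all $n\ge 0$ (with $n\ge1$ where $n-1$ indices or $\beta_n$ occur), the following identities hold: $$r_{n+1}+r_n=(t-\alpha_n)R_n,$$ $$-(y_{n+1}+y_n)=(\alpha_n-1)x_n+\beta,$$ $$y_{n+1}+y_n-r_{n+1}-r_n=2n+1+\alpha-\alpha_n(x_n-R_n),$$ $$\beta_nR_nR_{n-1}=r_n^2,$$ $$\beta_nx_nx_{n-1}=y_n^2+\beta y_n,$$ $$\beta_n(x_n-R_n)(x_{n-1}-R_{n-1})=(y_n-r_n-n)^2-\alpha(y_n-r_n-n),$$ $$\beta_n(x_nR_{n-1}+x_{n-1}R_n)=(2n+\alpha+\beta)y_n-(2n+\alpha)r_n+2y_nr_n-n(n+\alpha).$$
   Context: Fix $\alpha>0$, $\beta>0$, and real $A,B$ with $A\ge0$, $A+B\ge0$, not both zero; $\theta$ is the Heaviside step function. For $t\in(0,1)$ let $w(x;t)=x^\alpha(1-x)^\beta(A+B\theta(x-t))$ on $[0,1]$, and let $P_n(x)=P_n(x;t)=x^n+\mathsf p_1(n,t)x^{n-1}+\cdots$ be the monic orthogonal polynomials: $\int_0^1P_iP_jw\,dx=h_i(t)\delta_{ij}$, $h_i>0$, satisfying $xP_n=P_{n+1}+\alpha_nP_n+\beta_nP_{n-1}$, $P_{-1}=0$, $\beta_n=h_n/h_{n-1}$, $\mathsf p_1(0,t)=0$. Define $R_n(t)=B\,t^\alpha(1-t)^\beta P_n(t;t)^2/h_n$, $r_n(t)=B\,t^\alpha(1-t)^\beta P_n(t;t)P_{n-1}(t;t)/h_{n-1}$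 ($r_0=0$), $x_n(t)=\frac{\beta}{h_n}\int_0^1\frac{P_n(y)^2}{1-y}\,y^\alpha(1-y)^\beta(A+B\theta(y-t))\,dy$, $y_n(t)=\frac{\beta}{h_{n-1}}\int_0^1\frac{P_n(y)P_{n-1}(y)}{1-y}\,y^\alpha(1-y)^\beta(A+B\theta(y-t))\,dy$ ($y_0=0$). *)

From Stdlib Require Import Reals Lra ClassicalEpsilon.
Open Scope R_scope.

(* real power x^a on [0,oo), with 0^a := 0 (a>0) *)
Definition rpow (x a : R) : R :=
  if Rlt_dec 0 x then Rpower x a else 0.

(* Heaviside step function (value at 0 is irrelevant for integrals) *)
Definition theta (z : R) : R := if Rle_dec 0 z then 1 else 0.

Definition w (alpha beta A B t x : R) : R :=
  rpow x alpha * rpow (1 - x) beta * (A + B * theta (x - t)).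

Definition improper_int01 (f : R -> R) (l : R) : Prop :=
  (forall a b, 0 < a -> a <= b -> b < 1 ->
     exists _ : Riemann_integrable f a b, True) /\
  (forall eps, eps > 0 -> exists delta, delta > 0 /\
     forall a b (pr : Riemann_integrable f a b),
       0 < a -> a < delta -> 1 - delta < b -> b < 1 ->
       Rabs (RiemannInt pr - l) < eps).

Definition Int01 (f : R -> R) : R :=
  epsilon (inhabits 0) (fun l => improper_int01 f l).

Fixpoint psum (c : nat -> R) (x : R) (n : nat) : R :=
  match n with
  | O => 0
  | S m => psum c x m + c m * x ^ m
  end.

Definition monic_poly (n : nat) (f : R -> R) : Prop :=
  exists c : nat -> R, forall x, f x = x ^ n + psum c x n.

Definition Pprev (P : nat -> R -> R) (n : nat) : R -> R :=
  match n with O => fun _ => 0 | S m => P m end.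

Definition hn (alpha beta A B t : R) (P : nat -> R -> R) (n : nat) : R :=
  Int01 (fun x => P n x ^ 2 * w alpha beta A B t x).

(* beta_n = h_n / h_{n-1}  (used for n >= 1) *)
Definition betan (alpha beta A B t : R) (P : nat -> R -> R) (n : nat) : R :=
  hn alpha beta A B t P n / hn alpha beta A B t P (pred n).

Definition Rn (alpha beta A B t : R) (P : nat -> R -> R) (n : nat) : R :=
  B * rpow t alpha * rpow (1 - t) beta * P n t ^ 2 / hn alpha beta A B t P n.

Definition rn (alpha beta A B t : R) (P : nat -> R -> R) (n : nat) : R :=
  match n with
  | O => 0
  | S m => B * rpow t alpha * rpow (1 - t) beta * P n t * P m t
           / hn alpha beta A B t P m
  end.

Definition xn (alpha beta A B t : R) (P : nat -> R -> R) (n : nat) : R :=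
  beta / hn alpha beta A B t P n *
  Int01 (fun y => P n y ^ 2 / (1 - y) * w alpha beta A B t y).

Definition yn (alpha beta A B t : R) (P : nat -> R -> R) (n : nat) : R :=
  match n with
  | O => 0
  | S m => beta / hn alpha beta A B t P m *
           Int01 (fun y => P n y * P m y / (1 - y) * w alpha beta A B t y)
  end.

(* Write [L f] and [K f] for the integrals of [f w/(1-x)] and [f w/x]. Since [alpha, beta > 0],
   [x^alpha (1-x)^beta g] vanishes at 0 and 1, so integrating by parts against [w] gives
   [alpha K g - beta L g + int g' w = - B t^alpha (1-t)^beta g(t)], the right side being the
   jump of [w] at [t]. With [g = P_n^2], [P_(n+1) P_n] and [x P_n^2] and orthogonality, this
   expresses [x_n - R_n], [y_n - r_n - n] and [x_n] through [K] and [h_n]; the recurrence then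
   gives the linear identities. For the quadratic ones, writing [f - f(1) = (x-1) Q] with
   [deg Q < j] shows [L (P_j f) = f(1) L P_j] for monic [f] of degree [<= j] (and likewise
   at 0 for [K]); computing [L (P_(n+1) P_n)] (resp. [K]) in the two possible ways relates
   [L P_(n+1)] and [L P_n], and the identities reduce to one rational identity. *)

From Stdlib Require Import Reals Lra Lia FunctionalExtensionality ClassicalEpsilon.
Open Scope R_scope.

Lemma continuity_pt_cst c x : continuity_pt (fun _ => c) x.
Proof. now apply continuity_pt_const. Qed.

Lemma continuity_pt_idf x : continuity_pt (fun y => y) x.
Proof. apply derivable_continuous_pt, derivable_pt_id. Qed.

Lemma continuity_pt_of_lim f x l : derivable_pt_lim f x l -> continuity_pt f x.
Proof. intros H; apply derivable_continuous_pt; exists l; exact H. Qed.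

Lemma derivable_pt_lim_eq_val f x l l' : l = l' -> derivable_pt_lim f x l -> derivable_pt_lim f x l'.
Proof. now intros <-. Qed.

Lemma continuity_pt_reflect f x :
  continuity_pt f (1 - x) -> continuity_pt (fun y => f (1 - y)) x.
Proof.
  intros H. apply (continuity_pt_comp (fun y => 1 - y) f); [|exact H].
  apply continuity_pt_minus; [apply continuity_pt_cst|apply continuity_pt_idf].
Qed.

Lemma derivable_pt_lim_reflect f x l :
  derivable_pt_lim f (1 - x) l -> derivable_pt_lim (fun y => f (1 - y)) x (- l).
Proof.
  intros H. apply (derivable_pt_lim_eq_val _ _ (l * (0 - 1))); [ring|].
  apply (derivable_pt_lim_comp (fun y => 1 - y) f); [|exact H].
  apply derivable_pt_lim_minus; [apply derivable_pt_lim_const|apply derivable_pt_lim_id].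
Qed.

Lemma continuity_pt_near f x0 : continuity_pt f x0 -> forall eps, 0 < eps ->
  exists d, 0 < d /\ forall x, Rabs (x - x0) < d -> Rabs (f x - f x0) < eps.
Proof.
  intros H eps He. destruct (H eps He) as [d [Hd Hd']]. exists d; split; auto.
  intros x Hx. destruct (Req_dec x x0) as [->|Hne].
  - rewrite Rminus_diag, Rabs_R0; auto.
  - apply (Hd' x). split; [split; [exact I| auto]|]. exact Hx.
Qed.

Lemma Rpower_gt0 x c : 0 < Rpower x c.
Proof. apply exp_pos. Qed.

Lemma Rpower_le1 x c : 0 < x <= 1 -> 0 <= c -> Rpower x c <= 1.
Proof.
  intros Hx Hc. apply Rle_trans with (Rpower 1 c).
  - apply Rle_Rpower_l; lra.
  - unfold Rpower; rewrite ln_1, Rmult_0_r, exp_0; lra.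
Qed.

Lemma Rpower_pred x c : 0 < x -> Rpower x c = x * Rpower x (c - 1).
Proof.
  intros Hx. rewrite <- (Rpower_1 x) at 2 by auto. rewrite <- Rpower_plus. f_equal; ring.
Qed.

Lemma continuity_pt_Rpower x c : 0 < x -> continuity_pt (fun y => Rpower y c) x.
Proof. intros; eapply continuity_pt_of_lim; apply derivable_pt_lim_power; auto. Qed.

Lemma rpow_of_pos x c : 0 < x -> rpow x c = Rpower x c.
Proof. intros; unfold rpow; destruct (Rlt_dec 0 x); [auto|lra]. Qed.

Lemma rpow_of_nonpos x c : x <= 0 -> rpow x c = 0.
Proof. intros; unfold rpow; destruct (Rlt_dec 0 x); [lra|auto]. Qed.

Lemma rpow_ge0 x c : 0 <= rpow x c.
Proof. unfold rpow; destruct (Rlt_dec 0 x); [left; apply Rpower_gt0|lra]. Qed.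

Lemma rpow_le1 x c : x <= 1 -> 0 <= c -> rpow x c <= 1.
Proof. intros. unfold rpow; destruct (Rlt_dec 0 x); [apply Rpower_le1; lra|lra]. Qed.

Lemma derivable_pt_lim_rpow x c : 0 < x ->
  derivable_pt_lim (fun y => rpow y c) x (c * Rpower x (c - 1)).
Proof.
  intros Hx. apply (derivable_pt_lim_locally_ext (fun y => Rpower y c) _ x 0 (2 * x + 1)).
  - lra.
  - intros y Hy. rewrite rpow_of_pos; [auto|lra].
  - apply derivable_pt_lim_power; auto.
Qed.

Lemma continuity_pt_rpow x c : 0 < x -> continuity_pt (fun y => rpow y c) x.
Proof. intros; eapply continuity_pt_of_lim; apply derivable_pt_lim_rpow; auto. Qed.

Lemma continuity_pt_rpow0 c : 0 < c -> continuity_pt (fun y => rpow y c) 0.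
Proof.
  intros Hc eps Heps. exists (Rpower eps (/ c)). split; [apply Rpower_gt0|].
  intros y [_ Hy]. simpl in *. unfold Rdist in *. rewrite (rpow_of_nonpos 0) by lra.
  rewrite Rminus_0_r in *. destruct (Rle_dec y 0) as [Hy0|Hy0].
  - rewrite rpow_of_nonpos, Rabs_R0; auto.
  - rewrite rpow_of_pos by lra. rewrite Rabs_right by (left; apply Rpower_gt0).
    rewrite Rabs_right in Hy by lra.
    replace eps with (Rpower (Rpower eps (/ c)) c).
    + apply Rlt_Rpower_l; lra.
    + rewrite Rpower_mult, Rinv_l by lra. apply Rpower_1; auto.
Qed.

Lemma RiemannInt_FTC a b F f (pr : Riemann_integrable f a b) : a <= b ->
  (forall x, a <= x <= b -> derivable_pt_lim F x (f x)) ->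
  (forall x, a <= x <= b -> continuity_pt f x) -> RiemannInt pr = F b - F a.
Proof.
  intros Hab Hd Hc.
  rewrite (RiemannInt_P20 Hab (FTC_P1 Hab Hc) pr).
  assert (Hf := RiemannInt_P29 Hab Hc).
  assert (HF : antiderivative f F a b).
  { split; auto. intros x Hx. exists (exist _ (f x) (Hd x Hx)). reflexivity. }
  destruct (antiderivative_Ucte _ _ _ _ _ Hf HF) as [C HC].
  rewrite !HC; [ring|lra|lra].
Qed.

Lemma IsStepFun_const_inside f a b c : a <= b -> (forall x, a < x < b -> f x = c) ->
  IsStepFun f a b.
Proof.
  intros Hab H. exists (cons a (cons b nil)), (cons c nil).
  unfold adapted_couple; repeat split.
  - intros i Hi; simpl in Hi; inversion Hi; [simpl; assumption|lia].
  - simpl; unfold Rmin; destruct (Rle_dec a b); [reflexivity|lra].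
  - simpl; unfold Rmax; destruct (Rle_dec a b); [reflexivity|lra].
  - unfold constant_D_eq, open_interval; intros i Hi x Hx; simpl in Hi.
    inversion Hi; [|lia]. subst. apply H; auto.
Qed.

Lemma Riemann_integrable_zero_inside f a b : a <= b -> (forall x, a < x < b -> f x = 0) ->
  Riemann_integrable f a b.
Proof.
  intros Hab H eps. exists (mkStepFun (IsStepFun_const_inside f a b 0 Hab H)).
  exists (mkStepFun (StepFun_P4 a b 0)). split.
  - intros x _. simpl. unfold fct_cte. rewrite Rminus_diag, Rabs_R0. lra.
  - rewrite StepFun_P18, Rmult_0_l, Rabs_R0. apply cond_pos.
Qed.

Lemma theta_of_neg z : z < 0 -> theta z = 0.
Proof. intros; unfold theta; destruct (Rle_dec 0 z); [lra|auto]. Qed.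

Lemma theta_of_nonneg z : 0 <= z -> theta z = 1.
Proof. intros; unfold theta; destruct (Rle_dec 0 z); [auto|lra]. Qed.

Lemma theta_bounds z : 0 <= theta z <= 1.
Proof. unfold theta; destruct (Rle_dec 0 z); lra. Qed.

Lemma Riemann_integrable_jump C A B t a b : 0 < t < 1 ->
  (forall x, 0 < x < 1 -> continuity_pt C x) -> 0 < a -> a <= b -> b < 1 ->
  Riemann_integrable (fun x => C x * (A + B * theta (x - t))) a b.
Proof.
  intros Ht HC Ha Hab Hb.
  assert (CI : forall a b, 0 < a -> a <= b -> b < 1 -> Riemann_integrable C a b).
  { intros; apply continuity_implies_RiemannInt; auto. intros; apply HC; lra. }
  destruct (Rle_dec t a) as [Hta|Hta]; [|destruct (Rlt_dec b t) as [Hbt|Hbt]].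
  - apply Riemann_integrable_ext with (f := fun x => (A + B) * C x).
    + intros x Hx. rewrite Rmin_left, Rmax_right in Hx by auto.
      rewrite theta_of_nonneg by lra. ring.
    + apply Riemann_integrable_scal; auto.
  - apply Riemann_integrable_ext with (f := fun x => A * C x).
    + intros x Hx. rewrite Rmin_left, Rmax_right in Hx by auto.
      rewrite theta_of_neg by lra. ring.
    + apply Riemann_integrable_scal; auto.
  - apply RiemannInt_P24 with t.
    + apply Riemann_integrable_ext with (f := fun x => A * C x + B * (C x * theta (x - t))).
      { intros; ring. }
      apply RiemannInt_P10; [apply Riemann_integrable_scal, CI; lra|].
      apply Riemann_integrable_zero_inside; [lra|].
      intros x Hx. rewrite theta_of_neg by lra. ring.
    + apply Riemann_integrable_ext with (f := fun x => (A + B) * C x).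
      { intros x Hx. rewrite Rmin_left, Rmax_right in Hx by lra.
        rewrite theta_of_nonneg by lra. ring. }
      apply Riemann_integrable_scal, CI; lra.
Qed.

Lemma pos_lower_bound4 a b c e : 0 < a -> 0 < b -> 0 < c -> 0 < e ->
  exists d, 0 < d /\ d <= a /\ d <= b /\ d <= c /\ d <= e.
Proof.
  intros Ha Hb Hc He. exists (Rmin (Rmin a b) (Rmin c e)).
  assert (Hab := Rmin_l a b). assert (Hba := Rmin_r a b).
  assert (Hce := Rmin_l c e). assert (Hec := Rmin_r c e).
  assert (Hl := Rmin_l (Rmin a b) (Rmin c e)). assert (Hr := Rmin_r (Rmin a b) (Rmin c e)).
  repeat split; try lra. repeat apply Rmin_pos; auto.
Qed.

Lemma improper_int01_unique f l m : improper_int01 f l -> improper_int01 f m -> l = m.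
Proof.
  intros [H1 H2] [_ K2].
  destruct (Req_dec l m) as [|Hne]; auto. exfalso.
  assert (Hp : 0 < Rabs (l - m)) by (apply Rabs_pos_lt; lra).
  set (e := Rabs (l - m) / 2). assert (He : e > 0) by (unfold e; lra).
  destruct (H2 e He) as [d1 [Hd1 Hd1']]. destruct (K2 e He) as [d2 [Hd2 Hd2']].
  destruct (pos_lower_bound4 d1 d2 (1/2) (1/2)) as (d & ? & ? & ? & ? & _); try lra.
  destruct (H1 (d/2) (1 - d/2)) as [pr _]; try lra.
  assert (Rabs (RiemannInt pr - l) < e) by (apply Hd1'; lra).
  assert (Rabs (RiemannInt pr - m) < e) by (apply Hd2'; lra).
  assert (Rabs (l - m) <= Rabs (RiemannInt pr - l) + Rabs (RiemannInt pr - m)).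
  { replace (l - m) with (- (RiemannInt pr - l) + (RiemannInt pr - m)) by ring.
    eapply Rle_trans; [apply Rabs_triang|]. rewrite Rabs_Ropp; lra. }
  unfold e in *; lra.
Qed.

Lemma Int01_eq f l : improper_int01 f l -> Int01 f = l.
Proof.
  intros H. unfold Int01. apply (improper_int01_unique f); auto.
  apply epsilon_spec. exists l; auto.
Qed.

Lemma Int01_ext f g : (forall x, f x = g x) -> Int01 f = Int01 g.
Proof. intros H. f_equal. apply functional_extensionality; auto. Qed.

Lemma improper_int01_ext f g l : (forall x, f x = g x) -> improper_int01 f l -> improper_int01 g l.
Proof. intros H; replace g with f; auto; apply functional_extensionality; auto. Qed.

Lemma improper_int01_lin f g c l m : improper_int01 f l -> improper_int01 g m ->
  improper_int01 (fun x => f x + c * g x) (l + c * m).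
Proof.
  intros [H1 H2] [K1 K2]. split.
  - intros a b Ha Hab Hb. destruct (H1 a b Ha Hab Hb) as [p1 _].
    destruct (K1 a b Ha Hab Hb) as [p2 _]. exists (RiemannInt_P10 c p1 p2); auto.
  - intros eps Heps.
    assert (Hc : 0 < 1 + Rabs c) by (generalize (Rabs_pos c); lra).
    set (e := eps / (2 * (1 + Rabs c))).
    assert (He : e > 0) by (unfold e; apply Rdiv_lt_0_compat; lra).
    destruct (H2 e He) as [d1 [Hd1 Hd1']]. destruct (K2 e He) as [d2 [Hd2 Hd2']].
    destruct (pos_lower_bound4 d1 d2 (1/2) (1/2)) as (d & ? & ? & ? & ? & _); try lra.
    exists d. split; auto. intros a b pr Ha Had Hbd Hb.
    destruct (H1 a b) as [p1 _]; try lra. destruct (K1 a b) as [p2 _]; try lra.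
    rewrite (RiemannInt_P5 pr (RiemannInt_P10 c p1 p2)), (RiemannInt_P13 p1 p2).
    assert (Rabs (RiemannInt p1 - l) < e) by (apply Hd1'; lra).
    assert (Rabs (RiemannInt p2 - m) < e) by (apply Hd2'; lra).
    replace (RiemannInt p1 + c * RiemannInt p2 - (l + c * m)) with
      ((RiemannInt p1 - l) + c * (RiemannInt p2 - m)) by ring.
    eapply Rle_lt_trans; [apply Rabs_triang|]. rewrite Rabs_mult.
    assert (Rabs c * Rabs (RiemannInt p2 - m) <= Rabs c * e)
      by (apply Rmult_le_compat_l; [apply Rabs_pos|lra]).
    assert (e * (1 + Rabs c) = eps / 2) by (unfold e; field; lra).
    nra.
Qed.

Lemma Int01_lin f g c : (exists l, improper_int01 f l) -> (exists m, improper_int01 g m) ->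
  Int01 (fun x => f x + c * g x) = Int01 f + c * Int01 g.
Proof.
  intros [l Hl] [m Hm]. rewrite (Int01_eq _ _ Hl), (Int01_eq _ _ Hm).
  apply Int01_eq, improper_int01_lin; auto.
Qed.

Lemma continuity_pt_oscillation G x0 eps : continuity_pt G x0 -> 0 < eps ->
  exists d, 0 < d /\ forall x y, Rabs (x - x0) < d -> Rabs (y - x0) < d ->
    Rabs (G x - G y) < eps.
Proof.
  intros HG He. destruct (continuity_pt_near G x0 HG (eps/2)) as [d [Hd Hd']]; [lra|].
  exists d; split; auto. intros x y Hx Hy.
  replace (G x - G y) with ((G x - G x0) - (G y - G x0)) by ring.
  eapply Rle_lt_trans; [apply Rabs_triang|]. rewrite Rabs_Ropp.
  generalize (Hd' x Hx) (Hd' y Hy). lra.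
Qed.

Definition edge_gap (n : nat) : R := / (INR n + 3).

Lemma edge_gap_bounds n : 0 < edge_gap n < 1/2.
Proof.
  unfold edge_gap. assert (0 <= INR n) by apply pos_INR. split.
  - apply Rinv_0_lt_compat; lra.
  - replace (1/2) with (/ 2) by field. apply Rinv_lt_contravar; nra.
Qed.

Lemma edge_gap_decr n m : (n <= m)%nat -> edge_gap m <= edge_gap n.
Proof.
  intros H. apply Rinv_le_contravar; [generalize (pos_INR n); lra|].
  apply le_INR in H; lra.
Qed.

Lemma edge_gap_small d : 0 < d -> exists N, edge_gap N < d.
Proof.
  intros Hd. destruct (INR_unbounded (/ d)) as [N HN]. exists N. unfold edge_gap.
  assert (0 < / d) by (apply Rinv_0_lt_compat; auto).
  rewrite <- (Rinv_inv d). apply Rinv_lt_contravar; [|lra].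
  apply Rmult_lt_0_compat; generalize (pos_INR N); lra.
Qed.

Lemma edge_gap_in n : 0 < edge_gap n < 1.
Proof. generalize (edge_gap_bounds n); lra. Qed.
Lemma one_minus_edge_gap_in n : 0 < 1 - edge_gap n < 1.
Proof. generalize (edge_gap_bounds n); lra. Qed.

(* Comparison test: [|f| <= G'] bounds the integral of [f] over [[a, a']] by [|G a' - G a|],
   which is small near 0 and near 1 by continuity of [G] there. *)
Section Domination.
Variables f g G : R -> R.
Hypothesis f_int : forall a b, 0 < a -> a <= b -> b < 1 -> Riemann_integrable f a b.
Hypothesis f_le_g : forall x, 0 < x < 1 -> Rabs (f x) <= g x.
Hypothesis G_deriv : forall x, 0 < x < 1 -> derivable_pt_lim G x (g x).
Hypothesis g_cont : forall x, 0 < x < 1 -> continuity_pt g x.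
Hypothesis G_cont0 : continuity_pt G 0.
Hypothesis G_cont1 : continuity_pt G 1.

Lemma f_int_any a b : 0 < a < 1 -> 0 < b < 1 -> Riemann_integrable f a b.
Proof.
  intros Ha Hb. destruct (Rle_dec a b).
  - apply f_int; lra.
  - apply RiemannInt_P1, f_int; lra.
Qed.

Lemma RiemannInt_dominated a b (pr : Riemann_integrable f a b) : 0 < a < 1 -> 0 < b < 1 ->
  Rabs (RiemannInt pr) <= Rabs (G b - G a).
Proof.
  assert (K : forall a b (pr : Riemann_integrable f a b), 0 < a -> a <= b -> b < 1 ->
     Rabs (RiemannInt pr) <= Rabs (G b - G a)).
  { intros a' b' pr' Ha Hab Hb.
    assert (pg : Riemann_integrable g a' b').
    { apply continuity_implies_RiemannInt; auto. intros; apply g_cont; lra. }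
    eapply Rle_trans; [apply (RiemannInt_P17 pr' (RiemannInt_P16 pr') Hab)|].
    eapply Rle_trans; [apply (RiemannInt_P19 (RiemannInt_P16 pr') pg Hab)|].
    { intros x Hx. apply f_le_g; lra. }
    rewrite (RiemannInt_FTC a' b' G g pg Hab); [apply Rle_abs| |];
      intros; [apply G_deriv|apply g_cont]; lra. }
  intros Ha Hb. destruct (Rle_dec a b).
  - apply K; lra.
  - rewrite (RiemannInt_P8 pr (RiemannInt_P1 pr)), Rabs_Ropp, Rabs_minus_sym.
    apply K; lra.
Qed.

Lemma RiemannInt_dominated_diff a b a' b'
  (pr : Riemann_integrable f a b) (pr' : Riemann_integrable f a' b') :
  0 < a < 1 -> 0 < b < 1 -> 0 < a' < 1 -> 0 < b' < 1 ->
  Rabs (RiemannInt pr - RiemannInt pr') <= Rabs (G a' - G a) + Rabs (G b - G b').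
Proof.
  intros Ha Hb Ha' Hb'.
  pose (p1 := f_int_any a a' Ha Ha'). pose (p2 := f_int_any a b' Ha Hb').
  pose (p3 := f_int_any b' b Hb' Hb).
  rewrite <- (RiemannInt_P26 p2 p3 pr), <- (RiemannInt_P26 p1 pr' p2).
  replace (RiemannInt p1 + RiemannInt pr' + RiemannInt p3 - RiemannInt pr')
    with (RiemannInt p1 + RiemannInt p3) by ring.
  eapply Rle_trans; [apply Rabs_triang|].
  apply Rplus_le_compat; apply RiemannInt_dominated; auto.
Qed.

Definition segment_integral (n : nat) : R :=
  RiemannInt (f_int_any _ _ (edge_gap_in n) (one_minus_edge_gap_in n)).

Lemma G_oscillation_ends eps : 0 < eps -> exists d, 0 < d /\ forall x y,
  (0 < x < d /\ 0 < y < d) \/ (1 - d < x < 1 /\ 1 - d < y < 1) -> Rabs (G x - G y) < eps.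
Proof.
  intros He.
  destruct (continuity_pt_oscillation G 0 eps G_cont0 He) as [d0 [Hd0 H0]].
  destruct (continuity_pt_oscillation G 1 eps G_cont1 He) as [d1 [Hd1 H1]].
  destruct (pos_lower_bound4 d0 d1 1 1) as (d & Hd & ? & ? & _); try lra.
  exists d; split; auto. intros x y [[Hx Hy]|[Hx Hy]].
  - apply H0; rewrite Rminus_0_r, Rabs_right; lra.
  - apply H1; rewrite Rabs_left; lra.
Qed.

Lemma segment_integral_cauchy : Cauchy_crit segment_integral.
Proof.
  intros eps He.
  destruct (G_oscillation_ends (eps/2)) as [d [Hd Hosc]]; [lra|].
  destruct (edge_gap_small d Hd) as [N HN].
  exists N. intros n m Hn Hm. unfold Rdist, segment_integral.
  generalize (edge_gap_decr _ _ Hn) (edge_gap_decr _ _ Hm)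
    (edge_gap_bounds n) (edge_gap_bounds m); intros.
  eapply Rle_lt_trans;
    [apply RiemannInt_dominated_diff; auto using edge_gap_in, one_minus_edge_gap_in|].
  assert (Rabs (G (edge_gap m) - G (edge_gap n)) < eps/2) by (apply Hosc; lra).
  assert (Rabs (G (1 - edge_gap n) - G (1 - edge_gap m)) < eps/2) by (apply Hosc; lra).
  lra.
Qed.

Lemma improper_int01_dominated : exists l, improper_int01 f l.
Proof.
  destruct (R_complete _ segment_integral_cauchy) as [l Hl]. exists l. split.
  { intros a b Ha Hab Hb. exists (f_int a b Ha Hab Hb). auto. }
  intros eps He.
  destruct (G_oscillation_ends (eps/4)) as [d0 [Hd0 Hosc]]; [lra|].
  destruct (pos_lower_bound4 d0 (1/2) 1 1) as (d & Hd & ? & ? & _); try lra.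
  destruct (edge_gap_small d Hd) as [N1 HN1].
  destruct (Hl (eps/2)) as [N2 HN2]; [lra|].
  exists d. split; auto. intros a b pr Ha Had Hbd Hb.
  set (N := max N1 N2).
  assert (HN : edge_gap N < d).
  { eapply Rle_lt_trans; [apply edge_gap_decr, Nat.le_max_l|exact HN1]. }
  assert (Hu : Rdist (segment_integral N) l < eps/2) by (apply HN2, Nat.le_max_r).
  unfold Rdist in Hu. generalize (edge_gap_bounds N); intro.
  assert (Rabs (RiemannInt pr - segment_integral N) <=
    Rabs (G (edge_gap N) - G a) + Rabs (G b - G (1 - edge_gap N))).
  { apply RiemannInt_dominated_diff; try lra. }
  assert (Rabs (G (edge_gap N) - G a) < eps/4) by (apply Hosc; lra).
  assert (Rabs (G b - G (1 - edge_gap N)) < eps/4) by (apply Hosc; lra).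
  replace (RiemannInt pr - l) with
    ((RiemannInt pr - segment_integral N) + (segment_integral N - l)) by ring.
  eapply Rle_lt_trans; [apply Rabs_triang|]. lra.
Qed.
End Domination.

Definition kernel_integrable (k : R -> R) : Prop :=
  forall p, (forall x, continuity_pt p x) -> exists l, improper_int01 (fun x => p x * k x) l.

Definition kint (k p : R -> R) : R := Int01 (fun x => p x * k x).

Lemma kint_ext k p q : (forall x, p x = q x) -> kint k p = kint k q.
Proof. intros H. apply Int01_ext. intros; rewrite H; auto. Qed.

Section Kernel.
Variable k : R -> R.
Hypothesis k_int : kernel_integrable k.

Lemma kint_lin p q c : (forall x, continuity_pt p x) -> (forall x, continuity_pt q x) ->
  kint k (fun x => p x + c * q x) = kint k p + c * kint k q.
Proof.
  intros Hp Hq. unfold kint. rewrite <- Int01_lin by auto.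
  apply Int01_ext; intros; ring.
Qed.

Lemma kint_zero p : (forall x, p x = 0) -> kint k p = 0.
Proof.
  intros H.
  assert (Hc : forall x, continuity_pt p x).
  { intros x. apply (continuity_pt_locally_ext (fun _ => 0) p 1); auto using continuity_pt_cst; lra. }
  assert (E : kint k p = kint k (fun x => p x + 1 * p x)) by (apply kint_ext; intros; rewrite H; ring).
  rewrite kint_lin in E by auto. lra.
Qed.

Lemma kint_scal p c : (forall x, continuity_pt p x) -> kint k (fun x => c * p x) = c * kint k p.
Proof.
  intros Hp. rewrite (kint_ext _ _ (fun x => 0 + c * p x)) by (intros; ring).
  rewrite kint_lin by auto using continuity_pt_cst. rewrite (kint_zero (fun _ => 0)); auto. ring.
Qed.
End Kernel.

Lemma continuity_bound01 p : (forall x, continuity_pt p x) ->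
  exists M, forall x, 0 <= x <= 1 -> Rabs (p x) <= M.
Proof.
  intros Hp. destruct (continuity_ab_maj (fun y => Rabs (p y)) 0 1) as [Mx [HM _]]; [lra| |].
  - intros; apply (continuity_pt_comp p Rabs); auto. apply Rcontinuity_abs.
  - exists (Rabs (p Mx)); auto.
Qed.

Section Weight.
Variables alpha beta A B t : R.
Hypothesis alpha_pos : 0 < alpha.
Hypothesis beta_pos : 0 < beta.
Hypothesis t_in : 0 < t < 1.

Local Notation wt := (w alpha beta A B t).
Local Notation jacobi x := (rpow x alpha * rpow (1 - x) beta).

Lemma improper_int01_jump C g G : (forall x, 0 < x < 1 -> continuity_pt C x) ->
  (forall x, 0 < x < 1 -> Rabs (C x) <= g x) ->
  (forall x, 0 < x < 1 -> derivable_pt_lim G x (g x)) ->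
  (forall x, 0 < x < 1 -> continuity_pt g x) ->
  continuity_pt G 0 -> continuity_pt G 1 ->
  exists l, improper_int01 (fun x => C x * (A + B * theta (x - t))) l.
Proof.
  intros HC Hbd Hd Hg H0 H1. set (K := Rabs A + Rabs B).
  assert (HK : 0 <= K) by (unfold K; generalize (Rabs_pos A) (Rabs_pos B); lra).
  apply (improper_int01_dominated _ (fun x => K * g x) (fun x => K * G x)).
  - intros; apply Riemann_integrable_jump; auto.
  - intros x Hx. rewrite Rabs_mult, Rmult_comm.
    apply Rmult_le_compat; auto using Rabs_pos.
    eapply Rle_trans; [apply Rabs_triang|]. unfold K. rewrite Rabs_mult.
    generalize (theta_bounds (x - t)); intro. rewrite (Rabs_right (theta _)) by lra.
    generalize (Rabs_pos B); nra.
  - intros x Hx. apply (derivable_pt_lim_eq_val _ _ (0 * G x + K * g x)); [ring|].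
    apply derivable_pt_lim_mult; [apply derivable_pt_lim_const|auto].
  - intros; apply continuity_pt_mult; auto using continuity_pt_cst.
  - apply continuity_pt_mult; auto using continuity_pt_cst.
  - apply continuity_pt_mult; auto using continuity_pt_cst.
Qed.

Lemma continuity_pt_jacobi x : 0 < x < 1 -> continuity_pt (fun y => jacobi y) x.
Proof.
  intros Hx. apply continuity_pt_mult; [apply continuity_pt_rpow; lra|].
  apply (continuity_pt_reflect (fun z => rpow z beta)), continuity_pt_rpow; lra.
Qed.

Lemma kernel_integrable_w : kernel_integrable wt.
Proof.
  intros p Hp. destruct (continuity_bound01 p Hp) as [M HM].
  destruct (improper_int01_jump (fun x => p x * jacobi x) (fun _ => M) (fun x => M * x))
    as [l Hl].
  - intros. apply continuity_pt_mult; auto using continuity_pt_jacobi.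
  - intros x Hx. rewrite Rabs_mult, <- (Rmult_1_r M).
    apply Rmult_le_compat; auto using Rabs_pos; [apply HM; lra|].
    rewrite Rabs_right by (apply Rle_ge, Rmult_le_pos; apply rpow_ge0).
    generalize (rpow_le1 x alpha) (rpow_le1 (1 - x) beta) (rpow_ge0 x alpha)
      (rpow_ge0 (1 - x) beta); intros; nra.
  - intros. apply (derivable_pt_lim_eq_val _ _ (0 * x + M * 1)); [ring|].
    apply derivable_pt_lim_mult; [apply derivable_pt_lim_const|apply derivable_pt_lim_id].
  - intros; apply continuity_pt_cst.
  - apply continuity_pt_mult; auto using continuity_pt_cst, continuity_pt_idf.
  - apply continuity_pt_mult; auto using continuity_pt_cst, continuity_pt_idf.
  - exists l. eapply improper_int01_ext; [|exact Hl]. intros; unfold w; ring.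
Qed.

(* The singular factors [1/(1-x)] and [1/x] are compensated by [(1-x)^beta] and [x^alpha]:
   the integrands are dominated by [M (1-x)^(beta-1)] and [M x^(alpha-1)]. *)
Lemma kernel_integrable_w_div_1m : kernel_integrable (fun x => wt x / (1 - x)).
Proof.
  intros p Hp. destruct (continuity_bound01 p Hp) as [M HM].
  destruct (improper_int01_jump (fun x => p x / (1 - x) * jacobi x)
      (fun x => M * Rpower (1 - x) (beta - 1)) (fun x => - (M / beta) * rpow (1 - x) beta))
    as [l Hl].
  - intros x Hx. apply continuity_pt_mult; [|apply continuity_pt_jacobi; auto].
    apply continuity_pt_div; auto; [|lra].
    apply (continuity_pt_reflect (fun z => z)), continuity_pt_idf.
  - intros x Hx. rewrite !Rabs_mult, (rpow_of_pos x), (rpow_of_pos (1 - x)) by lra.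
    rewrite (Rpower_pred (1 - x) beta) by lra.
    rewrite (Rabs_right (Rpower x _)) by (left; apply Rpower_gt0).
    rewrite (Rabs_right ((1 - x) * _))
      by (apply Rle_ge, Rmult_le_pos; [lra|left; apply Rpower_gt0]).
    unfold Rdiv. rewrite Rabs_mult, (Rabs_right (/ (1 - x)))
      by (left; apply Rinv_0_lt_compat; lra).
    assert (Rabs (p x) <= M) by (apply HM; lra).
    assert (Rpower x alpha <= 1) by (apply Rpower_le1; lra).
    generalize (Rpower_gt0 x alpha) (Rpower_gt0 (1 - x) (beta - 1)) (Rabs_pos (p x)); intros.
    replace (Rabs (p x) * / (1 - x) * (Rpower x alpha * ((1 - x) * Rpower (1 - x) (beta - 1))))
      with (Rabs (p x) * Rpower x alpha * Rpower (1 - x) (beta - 1)) by (field; lra).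
    assert (Rabs (p x) * Rpower x alpha <= M) by nra. nra.
  - intros x Hx.
    apply (derivable_pt_lim_eq_val _ _ (0 * rpow (1 - x) beta
      + - (M / beta) * - (beta * Rpower (1 - x) (beta - 1)))); [field; lra|].
    apply (derivable_pt_lim_mult (fun _ => - (M / beta)) (fun y => rpow (1 - y) beta));
      [apply derivable_pt_lim_const|].
    apply (derivable_pt_lim_reflect (fun z => rpow z beta)), derivable_pt_lim_rpow; lra.
  - intros x Hx. apply continuity_pt_mult; [apply continuity_pt_cst|].
    apply (continuity_pt_reflect (fun z => Rpower z (beta - 1))), continuity_pt_Rpower; lra.
  - apply continuity_pt_mult; [apply continuity_pt_cst|].
    apply (continuity_pt_reflect (fun z => rpow z beta)), continuity_pt_rpow; lra.
  - apply continuity_pt_mult; [apply continuity_pt_cst|].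
    apply (continuity_pt_reflect (fun z => rpow z beta)).
    rewrite Rminus_diag. apply continuity_pt_rpow0; auto.
  - exists l. eapply improper_int01_ext; [|exact Hl]. intros; unfold w, Rdiv; ring.
Qed.

Lemma kernel_integrable_w_div_x : kernel_integrable (fun x => wt x / x).
Proof.
  intros p Hp. destruct (continuity_bound01 p Hp) as [M HM].
  destruct (improper_int01_jump (fun x => p x / x * jacobi x)
      (fun x => M * Rpower x (alpha - 1)) (fun x => (M / alpha) * rpow x alpha))
    as [l Hl].
  - intros x Hx. apply continuity_pt_mult; [|apply continuity_pt_jacobi; auto].
    apply continuity_pt_div; auto using continuity_pt_idf; lra.
  - intros x Hx. rewrite !Rabs_mult, (rpow_of_pos x), (rpow_of_pos (1 - x)) by lra.
    rewrite (Rpower_pred x alpha) by lra.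
    rewrite (Rabs_right (Rpower (1 - x) _)) by (left; apply Rpower_gt0).
    rewrite (Rabs_right (x * _))
      by (apply Rle_ge, Rmult_le_pos; [lra|left; apply Rpower_gt0]).
    unfold Rdiv. rewrite Rabs_mult, (Rabs_right (/ x))
      by (left; apply Rinv_0_lt_compat; lra).
    assert (Rabs (p x) <= M) by (apply HM; lra).
    assert (Rpower (1 - x) beta <= 1) by (apply Rpower_le1; lra).
    generalize (Rpower_gt0 (1 - x) beta) (Rpower_gt0 x (alpha - 1)) (Rabs_pos (p x)); intros.
    replace (Rabs (p x) * / x * (x * Rpower x (alpha - 1) * Rpower (1 - x) beta))
      with (Rabs (p x) * Rpower (1 - x) beta * Rpower x (alpha - 1)) by (field; lra).
    assert (Rabs (p x) * Rpower (1 - x) beta <= M) by nra. nra.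
  - intros x Hx.
    apply (derivable_pt_lim_eq_val _ _ (0 * rpow x alpha
      + (M / alpha) * (alpha * Rpower x (alpha - 1)))); [field; lra|].
    apply (derivable_pt_lim_mult (fun _ => M / alpha) (fun y => rpow y alpha));
      [apply derivable_pt_lim_const|].
    apply derivable_pt_lim_rpow; lra.
  - intros x Hx. apply continuity_pt_mult; [apply continuity_pt_cst|].
    apply continuity_pt_Rpower; lra.
  - apply continuity_pt_mult; [apply continuity_pt_cst|]. apply continuity_pt_rpow0; auto.
  - apply continuity_pt_mult; [apply continuity_pt_cst|]. apply continuity_pt_rpow; lra.
  - exists l. eapply improper_int01_ext; [|exact Hl]. intros; unfold w, Rdiv; ring.
Qed.
End Weight.

Section Parts.
Variables alpha beta A B t : R.
Hypothesis alpha_pos : 0 < alpha.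
Hypothesis beta_pos : 0 < beta.
Hypothesis t_in : 0 < t < 1.

Local Notation wt := (w alpha beta A B t).
Local Notation wL := (fun x => w alpha beta A B t x / (1 - x)).
Local Notation wK := (fun x => w alpha beta A B t x / x).

Lemma w_of_nonpos x : x <= 0 -> wt x = 0.
Proof. intros; unfold w. rewrite rpow_of_nonpos by auto. ring. Qed.

Lemma w_of_ge1 x : 1 <= x -> wt x = 0.
Proof. intros; unfold w. rewrite (rpow_of_nonpos (1 - x)) by lra. ring. Qed.

Lemma kint_w_div_x_mul_x p : kint wK (fun x => x * p x) = kint wt p.
Proof.
  apply Int01_ext. intros x. destruct (Req_dec x 0) as [->|Hx].
  - rewrite w_of_nonpos by lra. unfold Rdiv; ring.
  - field; auto.
Qed.

Lemma kint_w_div_1m_mul_x p : (forall x, continuity_pt p x) ->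
  kint wL (fun x => x * p x) = kint wL p - kint wt p.
Proof.
  intros Hp. unfold kint. unfold Rminus.
  rewrite <- (Rmult_1_l (Int01 (fun x => p x * wt x))), Ropp_mult_distr_l.
  rewrite <- Int01_lin by (apply kernel_integrable_w_div_1m || apply kernel_integrable_w; auto).
  apply Int01_ext. intros x. destruct (Req_dec x 1) as [->|Hx].
  - rewrite w_of_ge1 by lra. unfold Rdiv; ring.
  - field. lra.
Qed.

Variables g dg : R -> R.
Hypothesis g_deriv : forall x, derivable_pt_lim g x (dg x).
Hypothesis dg_cont : forall x, continuity_pt dg x.

Let g_cont x : continuity_pt g x := continuity_pt_of_lim g x _ (g_deriv x).

Let Wg x := rpow x alpha * rpow (1 - x) beta * g x.
Let dWg x := (alpha * Rpower x (alpha - 1) * rpow (1 - x) beta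
   + rpow x alpha * - (beta * Rpower (1 - x) (beta - 1))) * g x
   + rpow x alpha * rpow (1 - x) beta * dg x.
Let parts_integrand x := dg x * wt x + alpha * (g x * wK x) + - beta * (g x * wL x).

Lemma Wg_deriv x : 0 < x < 1 -> derivable_pt_lim Wg x (dWg x).
Proof.
  intros Hx. apply (derivable_pt_lim_mult (fun y => rpow y alpha * rpow (1 - y) beta) g);
    auto.
  apply (derivable_pt_lim_mult (fun y => rpow y alpha) (fun y => rpow (1 - y) beta));
    [apply derivable_pt_lim_rpow; lra|].
  apply (derivable_pt_lim_reflect (fun z => rpow z beta)), derivable_pt_lim_rpow; lra.
Qed.

Lemma dWg_cont x : 0 < x < 1 -> continuity_pt dWg x.
Proof.
  intros Hx. unfold dWg.
  apply continuity_pt_plus; apply continuity_pt_mult; auto; [|apply continuity_pt_jacobi; auto].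
  apply continuity_pt_plus; apply continuity_pt_mult.
  - apply continuity_pt_mult; [apply continuity_pt_cst|apply continuity_pt_Rpower; lra].
  - apply (continuity_pt_reflect (fun z => rpow z beta)), continuity_pt_rpow; lra.
  - apply continuity_pt_rpow; lra.
  - apply continuity_pt_opp, continuity_pt_mult; [apply continuity_pt_cst|].
    apply (continuity_pt_reflect (fun z => Rpower z (beta - 1))), continuity_pt_Rpower; lra.
Qed.

Lemma Wg_cont0 : continuity_pt Wg 0.
Proof.
  apply continuity_pt_mult; auto. apply continuity_pt_mult; [apply continuity_pt_rpow0; auto|].
  apply (continuity_pt_reflect (fun z => rpow z beta)), continuity_pt_rpow; lra.
Qed.

Lemma Wg_cont1 : continuity_pt Wg 1.
Proof.
  apply continuity_pt_mult; auto. apply continuity_pt_mult; [apply continuity_pt_rpow; lra|].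
  apply (continuity_pt_reflect (fun z => rpow z beta)).
  rewrite Rminus_diag. apply continuity_pt_rpow0; auto.
Qed.

Lemma parts_integrand_eq x : 0 < x < 1 ->
  parts_integrand x = dWg x * (A + B * theta (x - t)).
Proof.
  intros Hx. unfold parts_integrand, dWg, w. rewrite !rpow_of_pos by lra.
  rewrite (Rpower_pred x alpha), (Rpower_pred (1 - x) beta) by lra.
  field. lra.
Qed.

Lemma RiemannInt_parts_piece a b c (pr : Riemann_integrable parts_integrand a b) :
  0 < a -> a <= b -> b < 1 -> (forall x, a < x < b -> A + B * theta (x - t) = c) ->
  RiemannInt pr = c * (Wg b - Wg a).
Proof.
  intros Ha Hab Hb Hc.
  assert (Hcont : forall x, a <= x <= b -> continuity_pt (fun x => c * dWg x) x).
  { intros x Hx. apply continuity_pt_mult; [apply continuity_pt_cst|apply dWg_cont; lra]. }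
  assert (pq := continuity_implies_RiemannInt Hab Hcont).
  rewrite (RiemannInt_P18 pr pq Hab).
  - rewrite (RiemannInt_FTC a b (fun x => c * Wg x) _ pq Hab); [ring| |auto].
    intros x Hx. apply (derivable_pt_lim_eq_val _ _ (0 * Wg x + c * dWg x)); [ring|].
    apply (derivable_pt_lim_mult (fun _ => c) Wg);
      [apply derivable_pt_lim_const|apply Wg_deriv; lra].
  - intros x Hx. rewrite parts_integrand_eq, Hc by lra. ring.
Qed.

Lemma RiemannInt_parts a b (pr : Riemann_integrable parts_integrand a b) :
  0 < a < t -> t < b < 1 -> RiemannInt pr = (A + B) * Wg b - A * Wg a - B * Wg t.
Proof.
  intros Ha Hb. assert (Htab : a <= t <= b) by lra.
  rewrite <- (RiemannInt_P26 (RiemannInt_P22 pr Htab) (RiemannInt_P23 pr Htab) pr).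
  rewrite (RiemannInt_parts_piece a t A), (RiemannInt_parts_piece t b (A + B)); try lra.
  - intros x Hx. rewrite theta_of_nonneg by lra. ring.
  - intros x Hx. rewrite theta_of_neg by lra. ring.
Qed.

Lemma improper_int01_parts : improper_int01 parts_integrand (- (B * Wg t)).
Proof.
  destruct (kernel_integrable_w alpha beta A B t alpha_pos beta_pos t_in dg dg_cont) as [l0 H0].
  destruct (kernel_integrable_w_div_x alpha beta A B t alpha_pos beta_pos t_in g g_cont)
    as [l2 H2].
  destruct (kernel_integrable_w_div_1m alpha beta A B t alpha_pos beta_pos t_in g g_cont)
    as [l1 H1].
  split; [exact (proj1 (improper_int01_lin _ _ (- beta) _ _
                          (improper_int01_lin _ _ alpha _ _ H0 H2) H1))|].
  intros eps He.
  assert (HA := Rabs_pos A). assert (HAB := Rabs_pos (A + B)).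
  set (e0 := eps / (2 * (1 + Rabs A))). set (e1 := eps / (2 * (1 + Rabs (A + B)))).
  assert (He0 : 0 < e0) by (unfold e0; apply Rdiv_lt_0_compat; lra).
  assert (He1 : 0 < e1) by (unfold e1; apply Rdiv_lt_0_compat; lra).
  destruct (continuity_pt_near _ _ Wg_cont0 e0 He0) as [d0 [Hd0 Hd0']].
  destruct (continuity_pt_near _ _ Wg_cont1 e1 He1) as [d1 [Hd1 Hd1']].
  destruct (pos_lower_bound4 d0 d1 t (1 - t)) as (d & Hd & ? & ? & ? & ?); try lra.
  exists d. split; auto. intros a b pr Ha Had Hbd Hb.
  rewrite RiemannInt_parts by lra.
  replace ((A + B) * Wg b - A * Wg a - B * Wg t - - (B * Wg t))
    with ((A + B) * (Wg b - Wg 1) + - (A * (Wg a - Wg 0)))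
    by (unfold Wg; rewrite (rpow_of_nonpos 0), (rpow_of_nonpos (1 - 1)) by lra; ring).
  assert (Ka : Rabs (Wg a - Wg 0) < e0)
    by (apply Hd0'; rewrite Rminus_0_r, Rabs_right; lra).
  assert (Kb : Rabs (Wg b - Wg 1) < e1) by (apply Hd1'; rewrite Rabs_left; lra).
  eapply Rle_lt_trans; [apply Rabs_triang|]. rewrite Rabs_Ropp, !Rabs_mult.
  assert (Rabs (A + B) * Rabs (Wg b - Wg 1) <= Rabs (A + B) * e1)
    by (apply Rmult_le_compat_l; lra).
  assert (Rabs A * Rabs (Wg a - Wg 0) <= Rabs A * e0) by (apply Rmult_le_compat_l; lra).
  assert (e1 * (1 + Rabs (A + B)) = eps / 2) by (unfold e1; field; lra).
  assert (e0 * (1 + Rabs A) = eps / 2) by (unfold e0; field; lra).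
  nra.
Qed.

Lemma integration_by_parts :
  alpha * kint wK g - beta * kint wL g + kint wt dg
  = - (B * rpow t alpha * rpow (1 - t) beta * g t).
Proof.
  destruct (kernel_integrable_w alpha beta A B t alpha_pos beta_pos t_in dg dg_cont) as [l0 H0].
  destruct (kernel_integrable_w_div_x alpha beta A B t alpha_pos beta_pos t_in g g_cont)
    as [l2 H2].
  destruct (kernel_integrable_w_div_1m alpha beta A B t alpha_pos beta_pos t_in g g_cont)
    as [l1 H1].
  assert (E := improper_int01_unique _ _ _
    (improper_int01_lin _ _ (- beta) _ _ (improper_int01_lin _ _ alpha _ _ H0 H2) H1)
    improper_int01_parts).
  unfold kint. rewrite (Int01_eq _ _ H0), (Int01_eq _ _ H1), (Int01_eq _ _ H2).
  unfold Wg in E. lra.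
Qed.
End Parts.

Lemma psum_ext c d x n : (forall k, (k < n)%nat -> c k = d k) -> psum c x n = psum d x n.
Proof.
  induction n; intros H; simpl; auto.
  rewrite IHn by (intros; apply H; lia). rewrite H by lia. auto.
Qed.

Lemma psum_lin c d a x n : psum (fun k => c k + a * d k) x n = psum c x n + a * psum d x n.
Proof. induction n; simpl; [ring|]. rewrite IHn. ring. Qed.

Lemma psum_zero x n : psum (fun _ => 0) x n = 0.
Proof. induction n; simpl; [ring|]. rewrite IHn. ring. Qed.

Lemma continuity_pt_psum c n x : continuity_pt (fun y => psum c y n) x.
Proof.
  induction n; simpl; [apply continuity_pt_cst|].
  apply continuity_pt_plus; auto. apply continuity_pt_mult; [apply continuity_pt_cst|].
  eapply continuity_pt_of_lim, derivable_pt_lim_pow.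
Qed.

Definition deg_lt (n : nat) (f : R -> R) : Prop := exists c, forall x, f x = psum c x n.

Lemma deg_lt_cont n f : deg_lt n f -> forall x, continuity_pt f x.
Proof.
  intros [c Hc] x. apply (continuity_pt_locally_ext (fun y => psum c y n) f 1);
    auto using continuity_pt_psum; lra.
Qed.

Lemma deg_lt_lin n f g a : deg_lt n f -> deg_lt n g -> deg_lt n (fun x => f x + a * g x).
Proof.
  intros [c Hc] [d Hd]. exists (fun k => c k + a * d k). intros x. rewrite psum_lin, Hc, Hd. auto.
Qed.

Lemma deg_lt_zero n f : (forall x, f x = 0) -> deg_lt n f.
Proof. intros H. exists (fun _ => 0). intros; rewrite psum_zero; auto. Qed.

Lemma deg_lt_ext n f g : (forall x, f x = g x) -> deg_lt n f -> deg_lt n g.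
Proof. intros H [c Hc]. exists c. intros; rewrite <- H; auto. Qed.

Lemma deg_lt_S n f : deg_lt n f -> deg_lt (S n) f.
Proof.
  intros [c Hc]. exists (fun k => if Nat.ltb k n then c k else 0). intros x. simpl.
  rewrite Nat.ltb_irrefl, Hc, Rmult_0_l, Rplus_0_r.
  apply psum_ext. intros k Hk. apply Nat.ltb_lt in Hk. rewrite Hk. auto.
Qed.

Lemma deg_lt_pow k : deg_lt (S k) (fun x => x ^ k).
Proof.
  exists (fun j => if Nat.eqb j k then 1 else 0). intros x. simpl. rewrite Nat.eqb_refl.
  rewrite (psum_ext _ (fun _ => 0)), psum_zero; [ring|].
  intros j Hj. destruct (Nat.eqb_spec j k); [lia|auto].
Qed.

Lemma monic_poly_eq n f : monic_poly n f -> exists c, f = fun x => x ^ n + psum c x n.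
Proof. intros [c Hc]. exists c. apply functional_extensionality; auto. Qed.

Lemma monic_deg_lt n f : monic_poly n f -> deg_lt (S n) f.
Proof.
  intros [c Hc]. exists (fun k => if Nat.ltb k n then c k else 1). intros x. simpl.
  rewrite Nat.ltb_irrefl, Hc.
  rewrite (psum_ext (fun k => if Nat.ltb k n then c k else 1) c); [ring|].
  intros k Hk; apply Nat.ltb_lt in Hk; rewrite Hk; auto.
Qed.

Lemma monic_cont n f : monic_poly n f -> forall x, continuity_pt f x.
Proof. intros; apply (deg_lt_cont (S n)), monic_deg_lt; auto. Qed.

Lemma monic_sub n f g : monic_poly n f -> monic_poly n g -> deg_lt n (fun x => f x - g x).
Proof.
  intros [c Hc] [d Hd]. apply (deg_lt_ext n (fun x => psum c x n + (-1) * psum d x n)).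
  - intros; rewrite Hc, Hd; ring.
  - apply deg_lt_lin; [exists c|exists d]; auto.
Qed.

Lemma deg_lt_sub_monic n q p : deg_lt (S n) q -> monic_poly n p ->
  exists a, deg_lt n (fun x => q x - a * p x).
Proof.
  intros [c Hc] [d Hd]. exists (c n).
  apply (deg_lt_ext n (fun x => psum c x n + (- c n) * psum d x n)).
  - intros x. rewrite Hc, Hd. simpl. ring.
  - apply deg_lt_lin; [exists c|exists d]; auto.
Qed.

Lemma pow_sub_factor a n : exists Q, deg_lt n Q /\
  forall x, x ^ S n - a ^ S n = (x - a) * (x ^ n + Q x).
Proof.
  induction n as [|n [Q [HQ HE]]].
  - exists (fun _ => 0). split; [apply deg_lt_zero; auto|]. intros; simpl; ring.
  - exists (fun x => a * x ^ n + a * Q x). split.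
    + apply (deg_lt_ext (S n) (fun x => x ^ n + a * Q x + (a - 1) * x ^ n)); [intros; ring|].
      apply deg_lt_lin; [apply deg_lt_lin; [apply deg_lt_pow|apply deg_lt_S; auto]|].
      apply deg_lt_pow.
    + intros x.
      replace (x ^ S (S n) - a ^ S (S n)) with ((x - a) * x ^ S n + a * (x ^ S n - a ^ S n))
        by (simpl; ring).
      rewrite HE. simpl; ring.
Qed.

Lemma psum_sub_factor a c n : exists Q, deg_lt n Q /\
  forall x, psum c x (S n) - psum c a (S n) = (x - a) * Q x.
Proof.
  induction n as [|n [Q [HQ HE]]].
  - exists (fun _ => 0). split; [apply deg_lt_zero; auto|]. intros; simpl; ring.
  - destruct (pow_sub_factor a n) as [Q' [HQ' HE']].
    exists (fun x => Q x + c (S n) * (x ^ n + Q' x)). split.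
    + apply deg_lt_lin; [apply deg_lt_S; auto|].
      apply (deg_lt_ext (S n) (fun x => x ^ n + 1 * Q' x)); [intros; ring|].
      apply deg_lt_lin; [apply deg_lt_pow|apply deg_lt_S; auto].
    + intros x. change (psum c x (S (S n))) with (psum c x (S n) + c (S n) * x ^ (S n)).
      change (psum c a (S (S n))) with (psum c a (S n) + c (S n) * a ^ (S n)).
      replace (psum c x (S n) + c (S n) * x ^ S n - (psum c a (S n) + c (S n) * a ^ S n))
        with ((psum c x (S n) - psum c a (S n)) + c (S n) * (x ^ S n - a ^ S n)) by ring.
      rewrite HE, HE'. ring.
Qed.

Lemma monic_sub_factor n f a : monic_poly (S n) f ->
  exists Q, monic_poly n Q /\ forall x, f x - f a = (x - a) * Q x.
Proof.
  intros [c Hc]. destruct (pow_sub_factor a n) as [Q' [HQ' HE']].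
  destruct (psum_sub_factor a c n) as [Q [HQ HE]].
  destruct (deg_lt_lin n Q' Q 1 HQ' HQ) as [d Hd].
  exists (fun x => x ^ n + (Q' x + 1 * Q x)). split; [exists d; intros; rewrite Hd; auto|].
  intros x. rewrite !Hc.
  replace (x ^ S n + psum c x (S n) - (a ^ S n + psum c a (S n)))
    with ((x ^ S n - a ^ S n) + (psum c x (S n) - psum c a (S n))) by ring.
  rewrite HE, HE'. ring.
Qed.

Lemma monic_sub_factor_deg_lt n f a : monic_poly n f ->
  exists Q, deg_lt n Q /\ forall x, f x - f a = (x - a) * Q x.
Proof.
  destruct n as [|n].
  - intros [c Hc]. exists (fun _ => 0). split; [apply deg_lt_zero; auto|].
    intros; rewrite !Hc; simpl; ring.
  - intros H. destruct (monic_sub_factor n f a H) as [Q [HQ HE]].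
    exists Q; split; auto. apply monic_deg_lt; auto.
Qed.

Fixpoint dpsum (c : nat -> R) (x : R) (n : nat) : R :=
  match n with O => 0 | S m => dpsum c x m + c m * (INR m * x ^ pred m) end.

Lemma derivable_pt_lim_psum c n x : derivable_pt_lim (fun y => psum c y n) x (dpsum c x n).
Proof.
  induction n; simpl; [apply derivable_pt_lim_const|].
  apply derivable_pt_lim_plus; auto.
  apply (derivable_pt_lim_eq_val _ _ (0 * x ^ n + c n * (INR n * x ^ pred n))); [ring|].
  apply (derivable_pt_lim_mult (fun _ => c n) (fun y => y ^ n));
    [apply derivable_pt_lim_const|apply derivable_pt_lim_pow].
Qed.

Lemma mul_x_pow_pred x n : x * (INR n * x ^ pred n) = INR n * x ^ n.
Proof. destruct n; simpl; ring. Qed.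

Lemma mul_x_dpsum c n x : x * dpsum c x n = psum (fun k => INR k * c k) x n.
Proof.
  induction n; simpl; [ring|]. rewrite <- IHn.
  replace (INR n * c n * x ^ n) with (c n * (INR n * x ^ n)) by ring.
  rewrite <- (mul_x_pow_pred x n). ring.
Qed.

Lemma dpsum_deg_lt c m : deg_lt m (fun x => dpsum c x (S m)).
Proof.
  induction m.
  - apply deg_lt_zero. intros; simpl; ring.
  - apply (deg_lt_ext (S m) (fun x => dpsum c x (S m) + (c (S m) * INR (S m)) * x ^ m)).
    + intros; simpl; ring.
    + apply deg_lt_lin; [apply deg_lt_S; auto|apply deg_lt_pow].
Qed.

Lemma monic_derivative n f : monic_poly n f -> exists D,
  (forall x, derivable_pt_lim f x (D x)) /\ deg_lt n D /\
  deg_lt n (fun x => x * D x - INR n * f x) /\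
  (forall m g, n = S m -> monic_poly m g -> deg_lt m (fun x => D x - INR n * g x)).
Proof.
  intros Hf. destruct (monic_poly_eq n f Hf) as [c ->].
  exists (fun x => INR n * x ^ pred n + dpsum c x n). split; [|split; [|split]].
  - intros x. apply derivable_pt_lim_plus; [apply derivable_pt_lim_pow|apply derivable_pt_lim_psum].
  - destruct n as [|n]; [apply deg_lt_zero; intros; simpl; ring|].
    apply (deg_lt_ext _ (fun x => dpsum c x (S n) + INR (S n) * x ^ n)); [intros; simpl; ring|].
    apply deg_lt_lin; [apply deg_lt_S, dpsum_deg_lt|apply deg_lt_pow].
  - exists (fun k => INR k * c k + (- INR n) * c k). intros x.
    rewrite psum_lin, Rmult_plus_distr_l, mul_x_pow_pred, mul_x_dpsum. ring.
  - intros m g -> [d Hd].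
    apply (deg_lt_ext m (fun x => dpsum c x (S m) + (- INR (S m)) * psum d x m)).
    + intros x. rewrite Hd. simpl (pred (S m)). ring.
    + apply deg_lt_lin; [apply dpsum_deg_lt|exists d; auto].
Qed.

Section Orthogonal.
Variables alpha beta A B t : R.
Variable P : nat -> R -> R.
Hypothesis alpha_pos : 0 < alpha.
Hypothesis beta_pos : 0 < beta.
Hypothesis t_in : 0 < t < 1.
Hypothesis P_monic : forall n, monic_poly n (P n).
Hypothesis P_orth : forall i j, i <> j ->
  Int01 (fun x => P i x * P j x * w alpha beta A B t x) = 0.

Local Notation wt := (w alpha beta A B t).
Local Notation wL := (fun x => w alpha beta A B t x / (1 - x)).
Local Notation wK := (fun x => w alpha beta A B t x / x).
Local Notation h := (hn alpha beta A B t P).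
Local Notation jump := (B * rpow t alpha * rpow (1 - t) beta).

Let wt_int := kernel_integrable_w alpha beta A B t alpha_pos beta_pos t_in.
Let wL_int := kernel_integrable_w_div_1m alpha beta A B t alpha_pos beta_pos t_in.
Let wK_int := kernel_integrable_w_div_x alpha beta A B t alpha_pos beta_pos t_in.

Lemma P_cont n x : continuity_pt (P n) x.
Proof. apply (monic_cont n); auto. Qed.

Local Ltac cont :=
  repeat first [ apply P_cont | apply continuity_pt_cst | apply continuity_pt_idf
               | apply continuity_pt_minus | apply continuity_pt_plus
               | apply continuity_pt_opp | apply continuity_pt_mult | eapply deg_lt_cont; eassumption
               | eapply monic_cont; eassumption
               | match goal with H : forall x, continuity_pt ?f x |- continuity_pt ?f _ =>
                   apply H end ].

Lemma kint_P_P i j : i <> j -> kint wt (fun x => P i x * P j x) = 0.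
Proof. exact (P_orth i j). Qed.

Lemma hn_eq n : h n = kint wt (fun x => P n x * P n x).
Proof. apply Int01_ext. intros; ring. Qed.

Lemma kint_orth n q m : deg_lt n q -> (n <= m)%nat -> kint wt (fun x => P m x * q x) = 0.
Proof.
  revert q. induction n; intros q Hq Hm.
  - apply (kint_zero wt wt_int). intros x. destruct Hq as [c Hc]. rewrite Hc. simpl. ring.
  - destruct (deg_lt_sub_monic n q (P n) Hq (P_monic n)) as [a Ha].
    rewrite (kint_ext _ _ (fun x => P m x * (q x - a * P n x) + a * (P m x * P n x)))
      by (intros; ring).
    rewrite (kint_lin wt wt_int) by (intros; cont).
    rewrite (IHn _ Ha) by lia. rewrite (kint_P_P m n) by lia. ring.
Qed.

Lemma kint_monic m Q : monic_poly m Q -> kint wt (fun x => P m x * Q x) = h m.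
Proof.
  intros HQ. rewrite hn_eq.
  rewrite (kint_ext _ _ (fun x => P m x * (Q x - P m x) + 1 * (P m x * P m x))) by (intros; ring).
  rewrite (kint_lin wt wt_int) by (intros; cont).
  rewrite (kint_orth m) by (auto; apply monic_sub; auto). ring.
Qed.

Lemma kint_w_div_1m_factor j f Q : (forall x, continuity_pt f x) ->
  (forall x, continuity_pt Q x) -> (forall x, f x - f 1 = (x - 1) * Q x) ->
  kint wL (fun x => P j x * f x) = f 1 * kint wL (P j) - kint wt (fun x => P j x * Q x).
Proof.
  intros Hf HQ HE.
  rewrite (kint_ext _ _ (fun x => f 1 * P j x
                                  + 1 * (x * (P j x * Q x) + (-1) * (P j x * Q x)))).
  2:{ intros x. replace (f x) with (f 1 + (x - 1) * Q x) by (rewrite <- HE; ring). ring. }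
  rewrite (kint_lin wL wL_int), (kint_scal wL wL_int), (kint_lin wL wL_int) by (intros; cont).
  rewrite kint_w_div_1m_mul_x by (auto; intros; cont). ring.
Qed.

Lemma kint_w_div_x_factor j f Q : (forall x, continuity_pt f x) ->
  (forall x, continuity_pt Q x) -> (forall x, f x - f 0 = x * Q x) ->
  kint wK (fun x => P j x * f x) = f 0 * kint wK (P j) + kint wt (fun x => P j x * Q x).
Proof.
  intros Hf HQ HE.
  rewrite (kint_ext _ _ (fun x => f 0 * P j x + 1 * (x * (P j x * Q x)))).
  2:{ intros x. replace (f x) with (f 0 + x * Q x) by (rewrite <- HE; ring). ring. }
  rewrite (kint_lin wK wK_int), (kint_scal wK wK_int) by (intros; cont).
  rewrite kint_w_div_x_mul_x. ring.
Qed.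

Lemma kint_w_div_1m_low j k f : monic_poly k f -> (k <= j)%nat ->
  kint wL (fun x => P j x * f x) = f 1 * kint wL (P j).
Proof.
  intros Hf Hk. destruct (monic_sub_factor_deg_lt k f 1 Hf) as [Q [HQ HE]].
  rewrite (kint_w_div_1m_factor j f Q), (kint_orth k Q j) by (auto; intros; cont). ring.
Qed.

Lemma kint_w_div_1m_next m :
  kint wL (fun x => P m x * P (S m) x) = P (S m) 1 * kint wL (P m) - h m.
Proof.
  destruct (monic_sub_factor m (P (S m)) 1 (P_monic (S m))) as [Q [HQ HE]].
  rewrite (kint_w_div_1m_factor m (P (S m)) Q), kint_monic by (auto; intros; cont). auto.
Qed.

Lemma kint_w_div_x_low j k f : monic_poly k f -> (k <= j)%nat ->
  kint wK (fun x => P j x * f x) = f 0 * kint wK (P j).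
Proof.
  intros Hf Hk. destruct (monic_sub_factor_deg_lt k f 0 Hf) as [Q [HQ HE]].
  rewrite (kint_w_div_x_factor j f Q), (kint_orth k Q j) by (auto; intros; cont;
    rewrite HE; ring). ring.
Qed.

Lemma kint_w_div_x_next m :
  kint wK (fun x => P m x * P (S m) x) = P (S m) 0 * kint wK (P m) + h m.
Proof.
  destruct (monic_sub_factor m (P (S m)) 0 (P_monic (S m))) as [Q [HQ HE]].
  rewrite (kint_w_div_x_factor m (P (S m)) Q), kint_monic by (auto; intros; cont;
    rewrite HE; ring). auto.
Qed.

Lemma parts_product p q Dp Dq :
  (forall x, derivable_pt_lim p x (Dp x)) -> (forall x, derivable_pt_lim q x (Dq x)) ->
  (forall x, continuity_pt Dp x) -> (forall x, continuity_pt Dq x) ->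
  alpha * kint wK (fun x => p x * q x) - beta * kint wL (fun x => p x * q x)
  + kint wt (fun x => Dp x * q x + p x * Dq x) = - (jump * (p t * q t)).
Proof.
  intros Hp Hq HDp HDq.
  assert (Hpc : forall x, continuity_pt p x) by (intros; eapply continuity_pt_of_lim, Hp).
  assert (Hqc : forall x, continuity_pt q x) by (intros; eapply continuity_pt_of_lim, Hq).
  rewrite (integration_by_parts alpha beta A B t alpha_pos beta_pos t_in); [ring| |].
  - intros x. apply derivable_pt_lim_mult; auto.
  - intros x. cont; auto.
Qed.

Lemma parts_sq n : alpha * kint wK (fun x => P n x * P n x)
  - beta * kint wL (fun x => P n x * P n x) = - (jump * (P n t * P n t)).
Proof.
  destruct (monic_derivative n (P n) (P_monic n)) as [D [HD [HDdeg _]]].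
  assert (HI := parts_product (P n) (P n) D D HD HD (deg_lt_cont _ _ HDdeg) (deg_lt_cont _ _ HDdeg)).
  rewrite (kint_ext wt _ (fun x => P n x * D x + 1 * (P n x * D x))) in HI by (intros; ring).
  rewrite (kint_lin wt wt_int), (kint_orth n D n) in HI by (auto; intros; cont). lra.
Qed.

Lemma parts_next m : alpha * kint wK (fun x => P (S m) x * P m x)
  - beta * kint wL (fun x => P (S m) x * P m x) + INR (S m) * h m
  = - (jump * (P (S m) t * P m t)).
Proof.
  destruct (monic_derivative (S m) (P (S m)) (P_monic (S m)))
    as [D1 [HD1 [HD1deg [_ HD1sub]]]].
  destruct (monic_derivative m (P m) (P_monic m)) as [D0 [HD0 [HD0deg _]]].
  assert (Hs := HD1sub m (P m) eq_refl (P_monic m)).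
  assert (HI := parts_product (P (S m)) (P m) D1 D0 HD1 HD0
    (deg_lt_cont _ _ HD1deg) (deg_lt_cont _ _ HD0deg)).
  rewrite (kint_ext wt _ (fun x => (P m x * (D1 x - INR (S m) * P m x)
      + INR (S m) * (P m x * P m x)) + 1 * (P (S m) x * D0 x))) in HI by (intros; ring).
  rewrite !(kint_lin wt wt_int) in HI by (intros; cont).
  rewrite (kint_orth m _ m), (kint_orth m _ (S m)), <- hn_eq in HI by (auto; intros; cont).
  lra.
Qed.

Lemma parts_x_sq n : beta * kint wL (fun x => P n x * P n x)
  = (alpha + beta + 1 + 2 * INR n) * h n + jump * t * (P n t * P n t).
Proof.
  destruct (monic_derivative n (P n) (P_monic n)) as [D [HD [HDdeg [HxD _]]]].
  assert (HxP : forall x, derivable_pt_lim (fun y => y * P n y) x (1 * P n x + x * D x))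
    by (intros; apply derivable_pt_lim_mult; [apply derivable_pt_lim_id|auto]).
  assert (HI := parts_product (fun x => x * P n x) (P n) _ D HxP HD
    ltac:(intros; cont) (deg_lt_cont _ _ HDdeg)).
  rewrite (kint_ext wt _ (fun x => (P n x * P n x + 2 * (P n x * (x * D x - INR n * P n x)))
     + (2 * INR n) * (P n x * P n x))) in HI by (intros; ring).
  rewrite (kint_ext wK _ (fun x => x * (P n x * P n x))), kint_w_div_x_mul_x,
    (kint_ext wL _ (fun x => x * (P n x * P n x))), kint_w_div_1m_mul_x in HI
    by (intros; first [ring | assumption | cont]).
  rewrite !(kint_lin wt wt_int) in HI by (intros; cont).
  rewrite (kint_orth n (fun x => x * D x - INR n * P n x) n), <- hn_eq in HI
    by (auto; intros; cont).
  lra.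
Qed.
Variable al : nat -> R.
Hypothesis h_pos : forall n, 0 < h n.
Hypothesis P_rec : forall n x, x * P n x = P (S n) x + al n * P n x
                   + betan alpha beta A B t P n * Pprev P n x.

Local Notation R_ := (Rn alpha beta A B t P).
Local Notation r_ := (rn alpha beta A B t P).
Local Notation x_ := (xn alpha beta A B t P).
Local Notation y_ := (yn alpha beta A B t P).
Local Notation b_ := (betan alpha beta A B t P).

Lemma h_neq0 n : h n <> 0.
Proof. generalize (h_pos n); lra. Qed.

Lemma xn_eq n : x_ n = beta / h n * kint wL (fun x => P n x * P n x).
Proof. unfold xn. f_equal. apply Int01_ext. intros; unfold Rdiv; ring. Qed.

Lemma yn_eq m : y_ (S m) = beta / h m * kint wL (fun x => P (S m) x * P m x).
Proof. unfold yn. f_equal. apply Int01_ext. intros; unfold Rdiv; ring. Qed.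

Lemma Rn_eq n : R_ n = jump * (P n t * P n t) / h n.
Proof. unfold Rn, Rdiv. ring. Qed.

Lemma rn_eq m : r_ (S m) = jump * (P (S m) t * P m t) / h m.
Proof. unfold rn, Rdiv. ring. Qed.

Lemma betan_eq m : b_ (S m) = h (S m) / h m.
Proof. reflexivity. Qed.

Lemma Pprev_cont n x : continuity_pt (Pprev P n) x.
Proof. destruct n; simpl; [apply continuity_pt_cst|apply P_cont]. Qed.

Lemma rn_sum n : r_ (S n) + r_ n = (t - al n) * R_ n.
Proof.
  assert (H := P_rec n t). destruct n as [|m]; simpl Pprev in H.
  - rewrite rn_eq, Rn_eq. simpl rn.
    replace (P 1 t) with (t * P 0 t - al 0 * P 0 t) by lra.
    field. apply h_neq0.
  - rewrite betan_eq in H. rewrite !rn_eq, Rn_eq.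
    replace (P (S (S m)) t)
      with (t * P (S m) t - al (S m) * P (S m) t - h (S m) / h m * P m t) by lra.
    field. split; apply h_neq0.
Qed.

Lemma yn_sum n : - (y_ (S n) + y_ n) = (al n - 1) * x_ n + beta.
Proof.
  assert (E1 : kint wL (fun x => x * (P n x * P n x)) = kint wL (fun x => P n x * P n x) - h n)
    by (rewrite kint_w_div_1m_mul_x, <- hn_eq by (auto; intros; cont); auto).
  assert (E2 : kint wL (fun x => x * (P n x * P n x)) = (kint wL (fun x => P (S n) x * P n x)
      + al n * kint wL (fun x => P n x * P n x)) + b_ n * kint wL (fun x => P n x * Pprev P n x)).
  { rewrite (kint_ext wL _ (fun x => (P (S n) x * P n x + al n * (P n x * P n x))
      + b_ n * (P n x * Pprev P n x))).
    - rewrite !(kint_lin wL wL_int) by (intros; cont; apply Pprev_cont). auto.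
    - intros x. replace (x * (P n x * P n x)) with ((x * P n x) * P n x) by ring.
      rewrite P_rec. ring. }
  rewrite yn_eq, xn_eq. destruct n as [|m]; simpl Pprev in E2.
  - rewrite (kint_zero wL wL_int (fun x => P 0 x * 0)) in E2 by (intros; ring).
    simpl yn.
    replace (kint wL (fun x => P 1 x * P 0 x)) with (kint wL (fun x => P 0 x * P 0 x) - h 0
       - al 0 * kint wL (fun x => P 0 x * P 0 x)) by lra.
    field. apply h_neq0.
  - rewrite betan_eq in E2. rewrite yn_eq.
    replace (kint wL (fun x => P (S (S m)) x * P (S m) x))
      with (kint wL (fun x => P (S m) x * P (S m) x) - h (S m)
            - al (S m) * kint wL (fun x => P (S m) x * P (S m) x)
            - h (S m) / h m * kint wL (fun x => P (S m) x * P m x)) by lra.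
    field. split; apply h_neq0.
Qed.

Lemma xn_eq_Rn n : x_ n = 2 * INR n + 1 + alpha + beta + t * R_ n.
Proof.
  rewrite xn_eq, Rn_eq.
  replace (beta / h n * kint wL (fun x => P n x * P n x))
    with ((beta * kint wL (fun x => P n x * P n x)) / h n) by (field; apply h_neq0).
  rewrite parts_x_sq. field. apply h_neq0.
Qed.

Lemma yn_rn_sum n : y_ (S n) + y_ n - r_ (S n) - r_ n
  = 2 * INR n + 1 + alpha - al n * (x_ n - R_ n).
Proof.
  assert (H1 := rn_sum n). assert (H2 := yn_sum n). assert (H3 := xn_eq_Rn n).
  replace (y_ (S n) + y_ n - r_ (S n) - r_ n)
    with (- (- (y_ (S n) + y_ n)) - (r_ (S n) + r_ n)) by ring.
  rewrite H2, H1, H3. ring.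
Qed.

Lemma betan_Rn_Rn m : b_ (S m) * R_ (S m) * R_ m = r_ (S m) ^ 2.
Proof. rewrite betan_eq, !Rn_eq, rn_eq. field. split; apply h_neq0. Qed.

(* Both bilinear relations below reduce to this one: [u L0 - v L1 = s h0] comes from computing
   the mixed integral of [P (S m) P m] in the two possible ways. *)
Lemma ratio_product_identity h1 h0 b s u v L1 L0 : h1 <> 0 -> h0 <> 0 ->
  v * L1 = u * L0 - s * h0 ->
  (h1 / h0) * (b / h1 * (u * L1)) * (b / h0 * (v * L0))
  = (b / h0 * (v * L1)) ^ 2 + s * b * (b / h0 * (v * L1)).
Proof.
  intros H1 H0 E.
  replace ((h1 / h0) * (b / h1 * (u * L1)) * (b / h0 * (v * L0)))
    with (b * b * (v * L1) * (u * L0) / (h0 * h0)) by (field; auto).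
  replace (u * L0) with (v * L1 + s * h0) by lra. field; auto.
Qed.

Lemma betan_xn_xn m : b_ (S m) * x_ (S m) * x_ m = y_ (S m) ^ 2 + beta * y_ (S m).
Proof.
  rewrite betan_eq, !xn_eq, yn_eq.
  assert (E := kint_w_div_1m_next m).
  rewrite (kint_ext wL _ (fun x => P (S m) x * P m x)),
    (kint_w_div_1m_low (S m) m (P m)) in E by (auto; intros; ring).
  rewrite (kint_w_div_1m_low (S m) (S m) (P (S m))), (kint_w_div_1m_low m m (P m)),
    (kint_w_div_1m_low (S m) m (P m)) by auto.
  rewrite (ratio_product_identity _ _ _ 1) by (auto using h_neq0; lra). ring.
Qed.

Lemma xn_sub_Rn n : x_ n - R_ n = alpha / h n * kint wK (fun x => P n x * P n x).
Proof.
  rewrite xn_eq, Rn_eq. assert (H := parts_sq n).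
  replace (alpha / h n * kint wK (fun x => P n x * P n x))
    with ((beta * kint wL (fun x => P n x * P n x) - jump * (P n t * P n t)) / h n)
    by (field_simplify_eq; [lra|apply h_neq0]).
  field. apply h_neq0.
Qed.

Lemma yn_sub_rn m : y_ (S m) - r_ (S m) - INR (S m)
  = alpha / h m * kint wK (fun x => P (S m) x * P m x).
Proof.
  rewrite yn_eq, rn_eq. assert (H := parts_next m).
  replace (alpha / h m * kint wK (fun x => P (S m) x * P m x))
    with ((beta * kint wL (fun x => P (S m) x * P m x) - INR (S m) * h m
           - jump * (P (S m) t * P m t)) / h m)
    by (field_simplify_eq; [lra|apply h_neq0]).
  field. apply h_neq0.
Qed.

Lemma betan_xRn_xRn m : b_ (S m) * (x_ (S m) - R_ (S m)) * (x_ m - R_ m)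
  = (y_ (S m) - r_ (S m) - INR (S m)) ^ 2 - alpha * (y_ (S m) - r_ (S m) - INR (S m)).
Proof.
  rewrite betan_eq, !xn_sub_Rn, yn_sub_rn.
  assert (E := kint_w_div_x_next m).
  rewrite (kint_ext wK _ (fun x => P (S m) x * P m x)),
    (kint_w_div_x_low (S m) m (P m)) in E by (auto; intros; ring).
  rewrite (kint_w_div_x_low (S m) (S m) (P (S m))), (kint_w_div_x_low m m (P m)),
    (kint_w_div_x_low (S m) m (P m)) by auto.
  rewrite (ratio_product_identity _ _ _ (-1)) by (auto using h_neq0; lra). ring.
Qed.

Lemma betan_xR_Rx m : b_ (S m) * (x_ (S m) * R_ m + x_ m * R_ (S m))
  = (2 * INR (S m) + alpha + beta) * y_ (S m) - (2 * INR (S m) + alpha) * r_ (S m)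
    + 2 * y_ (S m) * r_ (S m) - INR (S m) * (INR (S m) + alpha).
Proof.
  replace (b_ (S m) * (x_ (S m) * R_ m + x_ m * R_ (S m))) with
    (b_ (S m) * x_ (S m) * x_ m + b_ (S m) * R_ (S m) * R_ m
     - b_ (S m) * (x_ (S m) - R_ (S m)) * (x_ m - R_ m)) by ring.
  rewrite betan_Rn_Rn, betan_xn_xn, betan_xRn_xRn. ring.
Qed.
End Orthogonal.

Theorem mainTheorem4 (alpha beta A B t : R) (P : nat -> R -> R) (al : nat -> R) :
  0 < alpha -> 0 < beta -> 0 <= A -> 0 <= A + B -> (A <> 0 \/ B <> 0) ->
  0 < t < 1 ->
  (forall n, monic_poly n (P n)) ->
  (forall i j, i <> j ->
     Int01 (fun x => P i x * P j x * w alpha beta A B t x) = 0) ->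
  (forall n, 0 < hn alpha beta A B t P n) ->
  (* al n = alpha_n: the three-term recurrence coefficients *)
  (forall n x, x * P n x = P (S n) x + al n * P n x
                 + betan alpha beta A B t P n * Pprev P n x) ->
  let R_ := Rn alpha beta A B t P in
  let r_ := rn alpha beta A B t P in
  let x_ := xn alpha beta A B t P in
  let y_ := yn alpha beta A B t P in
  let b_ := betan alpha beta A B t P in
  (forall n : nat,
     r_ (S n) + r_ n = (t - al n) * R_ n /\
     - (y_ (S n) + y_ n) = (al n - 1) * x_ n + beta /\
     y_ (S n) + y_ n - r_ (S n) - r_ n
       = 2 * INR n + 1 + alpha - al n * (x_ n - R_ n)) /\
  (forall n : nat, (1 <= n)%nat ->
     b_ n * R_ n * R_ (n - 1)%nat = r_ n ^ 2 /\
     b_ n * x_ n * x_ (n - 1)%nat = y_ n ^ 2 + beta * y_ n /\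
     b_ n * (x_ n - R_ n) * (x_ (n - 1)%nat - R_ (n - 1)%nat)
       = (y_ n - r_ n - INR n) ^ 2 - alpha * (y_ n - r_ n - INR n) /\
     b_ n * (x_ n * R_ (n - 1)%nat + x_ (n - 1)%nat * R_ n)
       = (2 * INR n + alpha + beta) * y_ n - (2 * INR n + alpha) * r_ n
         + 2 * y_ n * r_ n - INR n * (INR n + alpha)).
Proof.
  intros Ha Hb _ _ _ Ht Hmon Horth Hh Hrec R_ r_ x_ y_ b_.
  split.
  - intros n. split; [|split].
    + eapply rn_sum; eauto.
    + eapply yn_sum; eauto.
    + eapply yn_rn_sum; eauto.
  - intros [|m] Hm; [lia|]. replace (S m - 1)%nat with m by lia.
    split; [|split; [|split]].
    + eapply betan_Rn_Rn; eauto.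
    + eapply betan_xn_xn; eauto.
    + eapply betan_xRn_xRn; eauto.
    + eapply betan_xR_Rx; eauto.
Qed.
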